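(* Let $T$ be a tree. The faces of $\Delta_T$ having distributable capacity form a subcomplex of $\Delta_T$. Moreover, if $T'$ is a tree with vertex capacities having distributable capacity and $C$ is the vertex obtained by merging two neighboring vertices $C_1,C_2$ of $T'$ (with capacity $\mathrm{cap}(C_1)+\mathrm{cap}(C_2)$), then $\mathrm{cap}(C)\ge\deg(C)$.
   Context: For a tree $T$ on vertex set $[n]$, the Coxeter-like complex $\Delta_T$ has as faces: a set $E^C(F)$ of edges of $T$ to delete together with an assignment to each component $C$ of the resulting forest of exactly $|C|$ labels from $[n]$, each label used exactly once; $\sigma\subseteq\tau$ iff $\sigma$ is obtained from $\tau$ by merging neighboring components. For a tree with vertex capacities and an edge subset $E$, the associated tree has as vertices the components of the forest obtained by deleting $E$, as edges the edges of $E$, and capacity of a component equal to the sum of its vertex capacities. A tree with capacities has distributable capacity if $\mathrm{cap}(v)\ge\deg(v)-1$ for every vertex $v$. A face $F$ of $\Delta_T$ has distributable capacity if the tree associated to $(T,E^C(F))$, with all vertices of $T$ having capacity $1$, has distributable capacity. *)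

From mathcomp Require Import all_boot.
Set Implicit Arguments. Unset Strict Implicit. Unset Printing Implicit Defensive.

Section Trees.
Variable V : finType.

(* A graph on V is given by its edge set; each edge is a 2-element set. *)
Definition adj (Ed : {set {set V}}) : rel V := fun x y => [set x; y] \in Ed.

Definition is_tree (Ed : {set {set V}}) : Prop :=
  [/\ forall e, e \in Ed -> #|e| = 2,
      forall x y : V, connect (adj Ed) x y
    & (#|Ed|).+1 = #|V| ].

Definition deg (Ed : {set {set V}}) (v : V) : nat := #|[set e in Ed | v \in e]|.

Definition tree_distributable (Ed : {set {set V}}) (cap : V -> nat) : Prop :=
  forall v : V, deg Ed v - 1 <= cap v.

(* Associated tree of (T, E): vertices = components of T after deleting E,
   edges = E, capacity of a component = sum of vertex capacities. *)
Definition fcomp (Ed E : {set {set V}}) (x : V) : {set V} :=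
  [set y | connect (adj (Ed :\: E)) x y].

Definition components (Ed E : {set {set V}}) : {set {set V}} :=
  [set fcomp Ed E x | x : V].

Definition assoc_cap (cap : V -> nat) (C : {set V}) : nat := \sum_(v in C) cap v.

Definition assoc_deg (E : {set {set V}}) (C : {set V}) : nat :=
  #|[set e in E | e :&: C != set0]|.

Definition assoc_distributable (Ed E : {set {set V}}) (cap : V -> nat) : Prop :=
  forall C, C \in components Ed E -> assoc_deg E C - 1 <= assoc_cap cap C.

End Trees.

(* Faces of the Coxeter-like complex Delta_T, T a tree on [n] = 'I_n.
   fE = E^C(F), the set of deleted edges; fL assigns a label set to each
   component of the resulting forest. *)
Record face (n : nat) := Face {
  fE : {set {set 'I_n}};
  fL : {set 'I_n} -> {set 'I_n} }.

Definition is_face n (T : {set {set 'I_n}}) (F : face n) : Prop :=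
  [/\ fE F \subset T,
      forall C, C \in components T (fE F) -> #|fL F C| = #|C|,
      forall C C', C \in components T (fE F) -> C' \in components T (fE F) ->
        C != C' -> [disjoint fL F C & fL F C']
    & \bigcup_(C in components T (fE F)) fL F C = setT ].

(* sigma <= tau: sigma is obtained from tau by merging neighboring components
   (fewer deleted edges; labels of a merged component = union of labels). *)
Definition face_le n (T : {set {set 'I_n}}) (s t : face n) : Prop :=
  fE s \subset fE t /\
  forall C, C \in components T (fE s) ->
    fL s C = \bigcup_(C' in components T (fE t) | C' \subset C) fL t C'.

Definition face_distributable n (T : {set {set 'I_n}}) (F : face n) : Prop :=
  assoc_distributable T (fE F) (fun _ => 1%N).

From mathcomp Require Import all_boot.
Set Implicit Arguments. Unset Strict Implicit. Unset Printing Implicit Defensive.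

(* Putting a deleted edge e = {a, b} back merges the components Ca and Cb of
   a and b and leaves every other component unchanged (its degree can only
   drop).  As e is counted in the degrees of both Ca and Cb, the merged
   component has degree at most (deg Ca - 1) + (deg Cb - 1) <= cap Ca + cap Cb.
   Restoring the edges of E^C(tau) minus E^C(sigma) one at a time thus preserves
   distributability; only the fact that edges are 2-sets is used.  The bound
   cap C >= deg C is the same count for a single merged edge {C1, C2}. *)

Section Components.
Variable V : finType.
Implicit Types (G E Ed : {set {set V}}) (A B C : {set V}) (a b u w x y : V).

Lemma adj_sym G : symmetric (adj G).
Proof. by move=> x y; rewrite /adj setUC. Qed.

Lemma adj_connect_sym G : connect_sym (adj G).
Proof. exact/sym_connect_sym/adj_sym. Qed.

Definition ccomp G x : {set V} := [set y | connect (adj G) x y].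

Lemma fcompE Ed E x : fcomp Ed E x = ccomp (Ed :\: E) x.
Proof. by []. Qed.

Lemma ccomp_refl G x : x \in ccomp G x.
Proof. by rewrite inE connect0. Qed.

Lemma ccomp_adj G x u w : adj G u w -> u \in ccomp G x -> w \in ccomp G x.
Proof. by rewrite !inE => uw xu; apply: connect_trans xu (connect1 uw). Qed.

Lemma ccomp_sub_closed G A x :
  (forall u w, adj G u w -> u \in A -> w \in A) -> x \in A -> ccomp G x \subset A.
Proof.
move=> clA xA; apply/subsetP=> y; rewrite inE.
by move/(closed_connect (intro_closed (adj_connect_sym G) clA)) <-.
Qed.

Lemma ccomp_eq G x y : y \in ccomp G x -> ccomp G y = ccomp G x.
Proof.
rewrite inE => xy; apply/setP=> z; rewrite !inE.
by rewrite (same_connect (adj_connect_sym G) xy).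
Qed.

Lemma ccomp_disjoint G x y :
  ccomp G x != ccomp G y -> [disjoint ccomp G x & ccomp G y].
Proof.
apply: contraR => /pred0Pn [z /andP [xz yz]].
by rewrite -(ccomp_eq xz) -(ccomp_eq yz).
Qed.

Lemma ccomp_subset G G' x : G \subset G' -> ccomp G x \subset ccomp G' x.
Proof.
move=> sGG'; apply/subsetP=> y; rewrite !inE; apply: connect_sub => u w uw.
by apply/connect1; rewrite /adj (subsetP sGG').
Qed.

Lemma ccomp_set0 x : ccomp set0 x = [set x].
Proof.
apply/eqP; rewrite eqEsubset sub1set ccomp_refl andbT.
by apply: ccomp_sub_closed (set11 x) => u w; rewrite /adj in_set0.
Qed.

Section AddEdge.
Variables (G : {set {set V}}) (a b : V).
Let G' := [set a; b] |: G.

Lemma ccomp_setU1_sub x : ccomp G' x \subset ccomp G x :|: (ccomp G a :|: ccomp G b).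
Proof.
apply: ccomp_sub_closed; last by rewrite inE ccomp_refl.
move=> u w; rewrite /adj in_setU1 => /orP [/eqP uw_ab | uw] uS.
  have : w \in [set a; b] by rewrite -uw_ab !inE eqxx orbT.
  by rewrite !inE => /orP [] /eqP ->; rewrite connect0 ?orbT.
by move: uS; rewrite !in_setU => /or3P [] /(ccomp_adj uw) ->; rewrite ?orbT.
Qed.

Lemma ccomp_setU1 : ccomp G' a = ccomp G a :|: ccomp G b.
Proof.
have := ccomp_setU1_sub a; rewrite setUA setUid => sub_ab.
apply/eqP; rewrite eqEsubset sub_ab.
have sGG' : G \subset G' by exact: subsetUr.
have b_a : b \in ccomp G' a.
  by apply: ccomp_adj (ccomp_refl _ _); rewrite /adj setU11.
by rewrite subUset ccomp_subset // -(ccomp_eq b_a) ccomp_subset.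
Qed.

Lemma ccomp_setU1_notin x : a \notin ccomp G' x -> ccomp G' x = ccomp G x.
Proof.
move=> aNx; apply/eqP.
rewrite eqEsubset [_ \subset ccomp G' x]ccomp_subset ?subsetUr // andbT.
apply/subsetP=> y xy; move/subsetP/(_ y xy): (ccomp_setU1_sub x).
rewrite in_setU -ccomp_setU1 => /orP [// | ay].
by rewrite -(ccomp_eq xy) (ccomp_eq ay) ccomp_refl in aNx.
Qed.

End AddEdge.

Lemma setD_setD1 Ed E e : e \in Ed -> e \in E -> Ed :\: (E :\ e) = e |: (Ed :\: E).
Proof.
move=> eEd eE; apply/setP=> f; rewrite !inE.
by case: eqP => [-> | _]; rewrite ?eEd ?eE.
Qed.

Lemma assoc_deg_subset E E' C : E \subset E' -> assoc_deg E C <= assoc_deg E' C.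
Proof.
move=> sEE'; apply/subset_leq_card/subsetP=> f; rewrite !inE.
by case/andP=> /(subsetP sEE') -> ->.
Qed.

Lemma assoc_deg_setU E A B : assoc_deg E (A :|: B) <= assoc_deg E A + assoc_deg E B.
Proof.
apply: leq_trans (leq_card_setU _ _); apply/subset_leq_card/subsetP=> f.
rewrite !inE setIUr -andb_orr; case: (f \in E) => //=.
by rewrite -negb_and; apply: contra => /andP [/eqP -> /eqP ->]; rewrite setU0.
Qed.

Lemma assoc_deg_setD1 E C e :
  e \in E -> e :&: C != set0 -> assoc_deg E C = (assoc_deg (E :\ e) C).+1.
Proof.
move=> eE eC; rewrite /assoc_deg (cardsD1 e) inE eE eC add1n.
by congr _.+1; apply: eq_card => f; rewrite !inE andbA.
Qed.

Lemma assoc_deg_set1 E v : assoc_deg E [set v] = deg E v.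
Proof.
rewrite /assoc_deg /deg; apply: eq_card => f; rewrite !inE; congr (_ && _).
by apply/set0Pn/idP => [[z] | vf]; [rewrite !inE => /andP [? /eqP <-] | exists v];
  rewrite // !inE vf eqxx.
Qed.

Lemma assoc_cap_setU (cap : V -> nat) A B :
  [disjoint A & B] -> assoc_cap cap (A :|: B) = assoc_cap cap A + assoc_cap cap B.
Proof.
by move=> dAB; rewrite /assoc_cap -bigU //; apply: eq_bigl => v; rewrite !inE.
Qed.

Lemma assoc_cap_set1 (cap : V -> nat) v : assoc_cap cap [set v] = cap v.
Proof. exact: big_set1. Qed.

Section Distributable.
Variables (Ed : {set {set V}}) (cap : V -> nat).
Hypothesis edge2 : forall e, e \in Ed -> #|e| = 2.

Lemma fcomp_in_components E x : fcomp Ed E x \in components Ed E.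
Proof. by apply/imsetP; exists x. Qed.

Lemma assoc_distributable_setD1 E e :
  E \subset Ed -> e \in E ->
  assoc_distributable Ed E cap -> assoc_distributable Ed (E :\ e) cap.
Proof.
move=> sEEd eE distE _ /imsetP [x _ ->].
have eEd := subsetP sEEd e eE.
have /cards2P [a [b [_ def_e]]] : #|e| == 2 by rewrite edge2.
subst e; rewrite fcompE setD_setD1 //.
set G := Ed :\: E; set D := ccomp _ x.
have distE' z : z \in [set a; b] ->
    assoc_deg (E :\ [set a; b]) (ccomp G z) <= assoc_cap cap (ccomp G z).
  move=> ze; have := distE _ (fcomp_in_components E z).
  rewrite fcompE (assoc_deg_setD1 eE) ?subn1 //.
  by apply/set0Pn; exists z; rewrite inE ze ccomp_refl.
have [ae be] : a \in [set a; b] /\ b \in [set a; b] by rewrite !inE !eqxx orbT.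
case: (boolP (a \in D)) => [aD | aND].
- rewrite /D -(ccomp_eq aD) ccomp_setU1; apply: leq_trans (leq_subr 1 _) _.
  have [<- | neq_ab] := eqVneq (ccomp G a) (ccomp G b).
    by rewrite setUid; apply: distE'.
  rewrite assoc_cap_setU ?ccomp_disjoint //.
  exact: leq_trans (assoc_deg_setU _ _ _) (leq_add (distE' a ae) (distE' b be)).
- rewrite /D ccomp_setU1_notin //; apply: leq_trans (distE _ (fcomp_in_components E x)).
  exact/leq_sub2r/assoc_deg_subset/subD1set.
Qed.

Lemma assoc_distributable_subset E1 E2 :
  E1 \subset E2 -> E2 \subset Ed ->
  assoc_distributable Ed E2 cap -> assoc_distributable Ed E1 cap.
Proof.
move=> sE12; move def_n : #|E2 :\: E1| => n.
elim: n E2 def_n sE12 => [|n IH] E2 def_n sE12 sE2Ed distE2.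
  move/eqP: def_n; rewrite cards_eq0 setD_eq0 => sE21.
  by have -> : E1 = E2 by apply/eqP; rewrite eqEsubset sE12.
have /set0Pn [e] : E2 :\: E1 != set0 by rewrite -card_gt0 def_n.
rewrite inE => /andP [eNE1 eE2].
apply: (IH (E2 :\ e)).
- move: def_n; rewrite (cardsD1 e) inE eNE1 eE2 add1n => -[<-].
  by rewrite setDDl setUC -setDDl.
- apply/subsetP=> f fE1; rewrite in_setD1 (subsetP sE12) // andbT.
  by apply: contraNneq eNE1 => <-.
- exact: subset_trans (subD1set _ _) sE2Ed.
- exact: assoc_distributable_setD1.
Qed.

Lemma fcomp_edge a b : [set a; b] \in Ed -> fcomp Ed (Ed :\ [set a; b]) a = [set a; b].
Proof.
move=> abEd; rewrite fcompE setDDr setDv set0U (setIidPr _) ?sub1set //.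
by rewrite -[[set _]]setU0 ccomp_setU1 !ccomp_set0.
Qed.

Lemma assoc_deg_edge_setD1 e v :
  e \in Ed -> v \in e -> deg Ed v = (assoc_deg (Ed :\ e) [set v]).+1.
Proof.
move=> eEd ve; rewrite -assoc_deg_set1 (assoc_deg_setD1 eEd) //.
by apply/set0Pn; exists v; rewrite !inE ve eqxx.
Qed.

Lemma merge_edge_cap a b :
  tree_distributable Ed cap -> [set a; b] \in Ed ->
  assoc_deg (Ed :\ [set a; b]) [set a; b] <= assoc_cap cap [set a; b].
Proof.
move=> distT abEd.
have neq_ab : a != b by have := edge2 abEd; rewrite cards2; case: (a != b).
have degE := assoc_deg_edge_setD1 abEd.
apply: leq_trans (assoc_deg_setU _ _ _) _.
rewrite assoc_cap_setU ?disjoints1 ?inE // !assoc_cap_set1.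
by apply: leq_add; [have := distT a | have := distT b];
  rewrite degE ?inE ?eqxx ?orbT // subn1.
Qed.

End Distributable.

End Components.

Theorem mainTheorem6 :
  (forall (n : nat) (T : {set {set 'I_n}}), is_tree T ->
     forall s t : face n, is_face T s -> is_face T t -> face_le T s t ->
       face_distributable T t -> face_distributable T s)
  /\
  (forall (V : finType) (Ed : {set {set V}}) (cap : V -> nat) (C1 C2 : V),
     is_tree Ed -> tree_distributable Ed cap -> [set C1; C2] \in Ed ->
     let E' := Ed :\ [set C1; C2] in
     let C := fcomp Ed E' C1 in
     assoc_deg E' C <= assoc_cap cap C).
Proof.
split.
- move=> n T [edge2 _ _] s t _ [sET _ _ _] [sEst _].
  exact: assoc_distributable_subset.
- move=> V Ed cap C1 C2 [edge2 _ _] distT C12Ed /=.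
  by rewrite fcomp_edge //; apply: merge_edge_cap.
Qed.
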